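(* For all integers $k\ge 2$ and $n\ge 1$, $$\mathrm{spt}k_d(n)+\mathrm{spt}(k-1)_d(n)=\mathrm{spt}(k-1)_d(n-k+1)+p_d(n-k+1).$$
   Context: For a partition $\pi$, $s(\pi)$ denotes its smallest part. For $j\ge1$, $\mathrm{Spt}j_d(n)$ is the set of partitions $\pi$ of $n$ in which the smallest part $s(\pi)$ occurs exactly $j$ times and all remaining parts (those larger than $s(\pi)$) are pairwise distinct; $\mathrm{spt}j_d(n)=|\mathrm{Spt}j_d(n)|$, with $\mathrm{spt}j_d(n)=0$ for $n\le 0$. $p_d(n)$ is the number of partitions of $n$ into distinct parts, with $p_d(0)=1$ and $p_d(n)=0$ for $n<0$. *)

From mathcomp Require Import all_boot ssralg ssrint.
Set Implicit Arguments. Unset Strict Implicit. Unset Printing Implicit Defensive.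

(* A partition of n (n : nat) is encoded by its multiplicity function
   f : 'I_n -> 'I_n.+1, where f i is the number of times the part (i+1)
   occurs; the encoding is a bijection onto the partitions of n when we
   require  \sum_i (i+1) * f i = n  (every part is <= n and every
   multiplicity is <= n). *)
Definition mult_fun (n : nat) := {ffun 'I_n -> 'I_n.+1}.

Definition is_partition (n : nat) (f : mult_fun n) : bool :=
  \sum_(i < n) (i.+1 * f i) == n.

(* pi is in Spt j_d(n): with smallest part s = i+1 (the smallest index with
   positive multiplicity), s occurs exactly j times and every larger part
   occurs at most once. *)
Definition in_sptd (j n : nat) (f : mult_fun n) : bool :=
  is_partition f &&
  [exists i : 'I_n,
     [&& (f i == j :> nat),
         [forall i' : 'I_n, (i' < i) ==> (f i' == 0 :> nat)] &
         [forall i' : 'I_n, (i < i') ==> (f i' <= 1)]]].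

Definition is_distinct (n : nat) (f : mult_fun n) : bool :=
  is_partition f && [forall i : 'I_n, f i <= 1].

Definition sptd_nat (j n : nat) : nat := #|[set f : mult_fun n | in_sptd j f]|.
(* p_d(n) on natural numbers n (p_d(0) = 1: the empty partition). *)
Definition pd_nat (n : nat) : nat := #|[set f : mult_fun n | is_distinct f]|.

Definition sptd (j : nat) (n : int) : nat :=
  match n with Posz m => sptd_nat j m | Negz _ => 0 end.
Definition pd (n : int) : nat :=
  match n with Posz m => pd_nat m | Negz _ => 0 end.

From mathcomp Require Import all_boot all_algebra zify.
From Stdlib Require Import FunctionalExtensionality.

(* Put c = k - 1 and m = n - k + 1, so that n = m + c.  There is a bijection
   between Spt(c+1)_d(m+c) + Spt c_d(m+c) and Spt c_d(m) + D(m), D(m) being the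
   partitions of m into distinct parts.  A partition of m whose smallest part s
   occurs c times goes to the partition of m + c in which these c parts s become
   c parts s + 1; a partition of m into distinct parts receives c new parts 1.
   The image has distinct parts above its smallest part, which occurs c + 1 or c
   times according as that part was already present or not, and its smallest
   part is 1 exactly for the images of distinct partitions, so the map can be
   undone.  When n < k - 1 both sides vanish. *)

Set Implicit Arguments.
Unset Strict Implicit.
Unset Printing Implicit Defensive.

Lemma card_in_bij (T U : finType) (A : {pred T}) (B : {pred U})
    (f : T -> U) (g : U -> T) :
  {in A, forall x, f x \in B /\ g (f x) = x} ->
  {in B, forall y, g y \in A /\ f (g y) = y} ->
  #|A| = #|B|.
Proof.
move=> fAB gBA.
have f_inj : {in A &, injective f}.
  by move=> x y /fAB[_ fK] /fAB[_ fK'] fxy; rewrite -fK -fK' fxy.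
rewrite -(card_in_imset f_inj); apply: eq_card => y; apply/imsetP/idP.
  by case=> x /fAB[fx _] ->.
by move=> /gBA[gy gK]; exists (g y).
Qed.

Definition sum_set (T U : finType) (A : {set T}) (B : {set U}) : {set T + U} :=
  [set inl x | x in A] :|: [set inr y | y in B].

Section SumSet.
Variables (T U : finType) (A : {set T}) (B : {set U}).

Lemma in_sum_setl a : (inl a \in sum_set A B) = (a \in A).
Proof. by rewrite in_setU (mem_imset _ _ inl_inj); case: imsetP => [[]|]; rewrite ?orbF. Qed.

Lemma in_sum_setr b : (inr b \in sum_set A B) = (b \in B).
Proof. by rewrite in_setU (mem_imset _ _ inr_inj); case: imsetP => [[]|]. Qed.

Lemma card_sum_set : #|sum_set A B| = #|A| + #|B|.
Proof.
rewrite cardsU !card_imset; [|exact: inr_inj|exact: inl_inj].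
suff -> : [set inl x | x in A] :&: [set inr y | y in B] = set0 by rewrite cards0 subn0.
apply/setP=> z; rewrite !inE.
by apply/negP=> /andP[/imsetP[x _ ->] /imsetP[y _]].
Qed.

End SumSet.

Definition weight B (g : nat -> nat) := \sum_(i < B) i.+1 * g i.
Definition supported N (g : nat -> nat) := forall i, N <= i -> g i = 0.
Definition partition_mults N g := supported N g /\ weight N g = N.
Definition sptd_at j s (g : nat -> nat) :=
  [/\ g s = j, forall i, i < s -> g i = 0 & forall i, s < i -> g i <= 1].
Definition sptd_mults j N g := partition_mults N g /\ exists s, sptd_at j s g.
Definition distinct_mults N g := partition_mults N g /\ forall i, g i <= 1.

Lemma supported_lt N g i : supported N g -> 0 < g i -> i < N.
Proof. by move=> gN; apply: contraTT; rewrite -leqNgt => /gN ->. Qed.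

Lemma weight_widen N B g : supported N g -> N <= B -> weight B g = weight N g.
Proof.
move=> gN le_NB; rewrite /weight (big_ord_widen _ (fun i => i.+1 * g i) le_NB).
rewrite [RHS]big_mkcond; apply: eq_bigr => i _.
by case: ltnP => // /gN ->; rewrite muln0.
Qed.

Lemma weight_term B g i : i < B -> i.+1 * g i <= weight B g.
Proof. by move=> iB; rewrite /weight (bigD1 (Ordinal iB)) //= leq_addr. Qed.

Lemma partition_of_weight N B g :
  supported B g -> N <= B -> weight B g = N -> partition_mults N g.
Proof.
move=> gB le_NB wN.
have gN : supported N g.
  move=> i le_Ni; have [iB|/gB//] := ltnP i B.
  have := weight_term g iB; rewrite wN; case: (posnP (g i)) => // gi_gt0.
  by have := leq_pmulr i.+1 gi_gt0; lia.
by split; rewrite -?(weight_widen gN le_NB).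
Qed.

Lemma partition_mults_le N g i : partition_mults N g -> g i <= N.
Proof.
move=> [gN wN]; have [iN|/gN->//] := ltnP i N.
by rewrite -[X in _ <= X]wN (leq_trans _ (weight_term g iN)) // leq_pmull.
Qed.

Definition upd (g : nat -> nat) s v i := if i == s then v else g i.

Lemma weight_upd B g s v : s < B ->
  weight B (upd g s v) + s.+1 * g s = weight B g + s.+1 * v.
Proof.
move=> sB; rewrite /weight (bigD1 (Ordinal sB)) //= [in RHS](bigD1 (Ordinal sB)) //=.
rewrite /upd eqxx (eq_bigr (fun i : 'I_B => i.+1 * g i)) => [|i si]; last by rewrite ifN.
lia.
Qed.

Definition least_part B (g : nat -> nat) := find (fun i => 0 < g i) (iota 0 B).

Lemma least_partE B g s :
  s < B -> 0 < g s -> (forall i, i < s -> g i = 0) -> least_part B g = s.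
Proof.
move=> sB gs_gt0 below; rewrite /least_part.
have has_s : has (fun i => 0 < g i) (iota 0 B) by apply/hasP; exists s; rewrite ?mem_iota.
have [lt_ks|lt_sk|//] := ltngtP (find (fun i => 0 < g i) (iota 0 B)) s.
- have := nth_find 0 has_s; rewrite nth_iota ?add0n ?below //; exact: ltn_trans sB.
- by have := before_find 0 lt_sk; rewrite nth_iota // add0n gs_gt0.
Qed.

Lemma least_part_sptd N B j s g :
  supported N g -> N <= B -> sptd_at j s g -> 0 < j -> least_part B g = s.
Proof.
move=> gN le_NB [gs below _] j_gt0; have gs_gt0 : 0 < g s by rewrite gs.
by apply: least_partE => //; exact: leq_trans (supported_lt gN gs_gt0) le_NB.
Qed.

Section MultFun.
Variable N : nat.

Definition mults (f : mult_fun N) (i : nat) : nat :=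
  oapp (fun o : 'I_N => nat_of_ord (f o)) 0 (insub i).

Definition mult_fun_of (g : nat -> nat) : mult_fun N := [ffun o : 'I_N => inord (g o)].

Lemma mults_ord (f : mult_fun N) (o : 'I_N) : mults f o = f o.
Proof. by rewrite /mults valK. Qed.

Lemma mults_supported (f : mult_fun N) : supported N (mults f).
Proof. by move=> i le_Ni; rewrite /mults insubF // ltnNge le_Ni. Qed.

Lemma mults_K : cancel mults mult_fun_of.
Proof. by move=> f; apply/ffunP=> o; rewrite ffunE mults_ord inord_val. Qed.

Lemma mult_fun_ofK g : partition_mults N g -> mults (mult_fun_of g) = g.
Proof.
move=> gP; apply: functional_extensionality => i.
have [iN|le_Ni] := ltnP i N; last by rewrite mults_supported // gP.1.
rewrite -[i]/(nat_of_ord (Ordinal iN)) mults_ord ffunE inordK //.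
by rewrite ltnS partition_mults_le.
Qed.

Lemma is_partitionP (f : mult_fun N) :
  reflect (partition_mults N (mults f)) (is_partition f).
Proof.
rewrite /is_partition; have -> : \sum_(i < N) i.+1 * f i = weight N (mults f).
  by apply: eq_bigr => o _; rewrite mults_ord.
by apply: (iffP eqP) => [|[]//]; split; first exact: mults_supported.
Qed.

Lemma is_distinctP (f : mult_fun N) :
  reflect (distinct_mults N (mults f)) (is_distinct f).
Proof.
apply: (iffP andP) => [[/is_partitionP fP /forallP f_le1]|[fP f_le1]].
  split=> // i; have [iN|/mults_supported->//] := ltnP i N.
  by rewrite -[i]/(nat_of_ord (Ordinal iN)) mults_ord.
by split; [apply/is_partitionP | apply/forallP=> o; rewrite -mults_ord].
Qed.

Lemma in_sptdP j (f : mult_fun N) :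
  0 < j -> reflect (sptd_mults j N (mults f)) (in_sptd j f).
Proof.
move=> j_gt0; apply: (iffP andP) => [[/is_partitionP fP]|[fP [s [fs below above]]]].
  case/existsP=> i /and3P[/eqP fi /forallP below /forallP above].
  split=> //; exists i; split; first by rewrite mults_ord.
    move=> i' lt_i'i; have i'N := ltn_trans lt_i'i (ltn_ord i).
    by have /implyP/(_ lt_i'i)/eqP := below (Ordinal i'N); rewrite -mults_ord.
  move=> i' lt_ii'; have [i'N|/mults_supported->//] := ltnP i' N.
  by have /implyP/(_ lt_ii') := above (Ordinal i'N); rewrite -mults_ord.
have sN : s < N by apply: (supported_lt fP.1); rewrite fs.
split; first exact/is_partitionP.
apply/existsP; exists (Ordinal sN); rewrite -mults_ord fs eqxx /=.
by apply/andP; split; apply/forallP=> o; apply/implyP; rewrite -mults_ord;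
  [move/below-> | move/above].
Qed.

End MultFun.

Ltac upd_cases :=
  rewrite /upd;
  repeat match goal with |- context [?a == ?b] =>
    have [e|?] := eqVneq a b; [try subst a|] end;
  rewrite /=; try lia.

Section Moves.
Variables (m c : nat).
Local Notation n := (m + c).

Definition raise s g := upd (upd g s 0) s.+1 (g s.+1 + c).
Definition lower s h := upd (upd h s (h s - c)) s.-1 c.
Definition add_ones g := upd g 0 (g 0 + c).
Definition remove_ones h := upd h 0 (h 0 - c).

Lemma lower_raise s g : g s = c -> lower s.+1 (raise s g) = g.
Proof.
move=> gs; apply: functional_extensionality => i.
by rewrite /lower /raise; upd_cases.
Qed.

Lemma raise_lower s h : 0 < s -> c <= h s -> h s.-1 = 0 -> raise s.-1 (lower s h) = h.
Proof.
move=> s_gt0 le_chs hs1; apply: functional_extensionality => i.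
rewrite /lower /raise prednK //; upd_cases.
Qed.

Lemma remove_add_ones g : remove_ones (add_ones g) = g.
Proof.
apply: functional_extensionality => i.
by rewrite /remove_ones /add_ones; upd_cases.
Qed.

Lemma add_remove_ones h : c <= h 0 -> add_ones (remove_ones h) = h.
Proof.
move=> le_ch0; apply: functional_extensionality => i.
by rewrite /remove_ones /add_ones; upd_cases.
Qed.

Hypothesis c_gt0 : 0 < c.

Lemma raise_sptd s g : partition_mults m g -> sptd_at c s g ->
  partition_mults n (raise s g) /\ sptd_at (g s.+1 + c) s.+1 (raise s g).
Proof.
move=> [gm wm] [gs below above]; have sm : s < m by apply: (supported_lt gm); rewrite gs.
rewrite /raise; split; last first.
  by split=> [|i lt_i|i lt_i]; upd_cases; [apply: below | apply: above]; lia.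
split=> [i le_ni|]; first by upd_cases; apply: gm; lia.
have next_kept : upd g s 0 s.+1 = g s.+1 by upd_cases.
have := weight_upd (upd g s 0) (g s.+1 + c) (ltac:(lia) : s.+1 < n); rewrite next_kept.
have := weight_upd g 0 (ltac:(lia) : s < n).
rewrite gs (weight_widen gm (leq_addr c m)) wm.
nia.
Qed.

Lemma add_ones_sptd g : distinct_mults m g ->
  partition_mults n (add_ones g) /\ sptd_at (g 0 + c) 0 (add_ones g).
Proof.
move=> [[gm wm] g_le1]; rewrite /add_ones.
split; last by split=> // i; upd_cases.
split=> [i le_ni|]; first by upd_cases; apply: gm; lia.
have := weight_upd g (g 0 + c) (ltac:(lia) : 0 < n).
rewrite (weight_widen gm (leq_addr c m)) wm; nia.
Qed.

Lemma lower_sptd j s h : partition_mults n h -> sptd_at j s h ->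
  0 < s -> c <= j <= c.+1 ->
  partition_mults m (lower s h) /\ sptd_at c s.-1 (lower s h).
Proof.
move=> [hn wn] [hs below above] s_gt0 /andP[le_cj le_jc1].
have sn : s < n by apply: (supported_lt hn); rewrite hs; lia.
rewrite /lower; split; last first.
  by split=> [|i lt_i|i lt_i]; upd_cases; [apply: below | apply: above]; lia.
apply: (partition_of_weight (B := n) _ (leq_addr c m)) => [i le_ni|].
  by upd_cases; apply: hn; lia.
have prev_empty : upd h s (h s - c) s.-1 = 0 by upd_cases; apply: below; lia.
have := weight_upd (upd h s (h s - c)) c (ltac:(lia) : s.-1 < n).
rewrite prev_empty prednK //.
have := weight_upd h (h s - c) sn; rewrite hs.
nia.
Qed.

Lemma remove_ones_distinct j h : partition_mults n h -> sptd_at j 0 h ->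
  c <= j <= c.+1 -> distinct_mults m (remove_ones h).
Proof.
move=> [hn wn] [h0 _ above] /andP[le_cj le_jc1]; rewrite /remove_ones.
split; last by move=> i; upd_cases; apply: above; lia.
apply: (partition_of_weight (B := n) _ (leq_addr c m)) => [i le_ni|].
  by upd_cases; apply: hn; lia.
have := weight_upd h (h 0 - c) (ltac:(lia) : 0 < n); rewrite h0.
nia.
Qed.

End Moves.

Section Bijection.
Variables (m c : nat).
Hypothesis c_gt0 : 0 < c.
Local Notation n := (m + c).

Definition sptd_c_or_cS h := exists2 j, c <= j <= c.+1 & sptd_mults j n h.

Definition phi (x : mult_fun m + mult_fun m) : nat -> nat :=
  match x with
  | inl f => raise c (least_part n (mults f)) (mults f)
  | inr f => add_ones c (mults f)
  end.

Definition psi (h : nat -> nat) : mult_fun m + mult_fun m :=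
  let s := least_part n h in
  if s == 0 then inr (mult_fun_of m (remove_ones c h))
  else inl (mult_fun_of m (lower c s h)).

Definition tag_by_mult (h : nat -> nat) : mult_fun n + mult_fun n :=
  let f := mult_fun_of n h in if h (least_part n h) == c.+1 then inl f else inr f.

Definition untag (y : mult_fun n + mult_fun n) : mult_fun n :=
  match y with inl f | inr f => f end.

Definition lhs_set :=
  sum_set [set f : mult_fun n | in_sptd c.+1 f] [set f : mult_fun n | in_sptd c f].
Definition rhs_set :=
  sum_set [set f : mult_fun m | in_sptd c f] [set f : mult_fun m | is_distinct f].

Lemma phi_spec x : x \in rhs_set -> sptd_c_or_cS (phi x) /\ psi (phi x) = x.
Proof.
case: x => f; rewrite ?in_sum_setl ?in_sum_setr inE /=.
  case/(in_sptdP _ c_gt0)=> fP [s fs].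
  have -> : least_part n (mults f) = s by apply: least_part_sptd fP.1 (leq_addr c m) fs c_gt0.
  have [rP rs] := raise_sptd c_gt0 fP fs.
  have [g_s _ above] := fs.
  split.
    exists (mults f s.+1 + c); last by split=> //; exists s.+1.
    by have := above s.+1 (ltnSn s); lia.
  rewrite /psi (least_part_sptd rP.1 (leqnn n) rs (ltn_addl _ c_gt0)) /=.
  by rewrite lower_raise // mults_K.
move/is_distinctP=> fP.
have [aP a0] := add_ones_sptd c_gt0 fP.
split.
  exists (mults f 0 + c); last by split=> //; exists 0.
  by have := fP.2 0; lia.
rewrite /psi (least_part_sptd aP.1 (leqnn n) a0 (ltn_addl _ c_gt0)) /=.
by rewrite remove_add_ones mults_K.
Qed.

Lemma psi_spec h : sptd_c_or_cS h -> psi h \in rhs_set /\ phi (psi h) = h.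
Proof.
move=> [j hj [hP [s hs]]]; have j_gt0 : 0 < j by lia.
rewrite /psi (least_part_sptd hP.1 (leqnn n) hs j_gt0).
have [h_s below _] := hs; case: s hs h_s below => [|s] hs h_s below /=.
  have dP := remove_ones_distinct c_gt0 hP hs hj.
  rewrite in_sum_setr inE; split; first by apply/is_distinctP; rewrite mult_fun_ofK; case: dP.
  rewrite /= (mult_fun_ofK dP.1) add_remove_ones // h_s; by case/andP: hj.
have [lP ls] := lower_sptd c_gt0 hP hs (ltn0Sn s) hj.
rewrite in_sum_setl inE; split.
  by apply/(in_sptdP _ c_gt0); rewrite (mult_fun_ofK lP); split=> //; exists s.
have le_c_hs : c <= h s.+1 by rewrite h_s; case/andP: hj.
rewrite /= (mult_fun_ofK lP) (least_part_sptd lP.1 (leq_addr c m) ls c_gt0).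
exact: raise_lower (ltn0Sn s) le_c_hs (below s (ltnSn s)).
Qed.

Lemma untag_tag_by_mult h : untag (tag_by_mult h) = mult_fun_of n h.
Proof. by rewrite /tag_by_mult; case: ifP. Qed.

Definition Phi x := tag_by_mult (phi x).
Definition Psi y := psi (mults (untag y)).

Lemma tag_by_mult_spec h :
  sptd_c_or_cS h -> tag_by_mult h \in lhs_set /\ Psi (tag_by_mult h) = psi h.
Proof.
move=> [j hj [hP [s hs]]]; have j_gt0 : 0 < j by lia.
have hK := mult_fun_ofK hP.
split; last by rewrite /Psi untag_tag_by_mult hK.
rewrite /tag_by_mult (least_part_sptd hP.1 (leqnn n) hs j_gt0); have [-> _ _] := hs.
have [e|ne] := eqVneq j c.+1.
  rewrite in_sum_setl inE.
  by apply/(in_sptdP _ (ltn0Sn c)); rewrite hK -e; split=> //; exists s.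
have j_c : j = c by lia.
rewrite j_c in hs; rewrite in_sum_setr inE.
by apply/(in_sptdP _ c_gt0); rewrite hK; split=> //; exists s.
Qed.

Lemma tag_by_mult_untag y :
  y \in lhs_set -> sptd_c_or_cS (mults (untag y)) /\ tag_by_mult (mults (untag y)) = y.
Proof.
have c1_gt0 : 0 < c.+1 by [].
case: y => f; rewrite ?in_sum_setl ?in_sum_setr inE /=.
  case/(in_sptdP _ c1_gt0)=> fP [s fs].
  split; first by exists c.+1; [lia | split=> //; exists s].
  rewrite /tag_by_mult (least_part_sptd fP.1 (leqnn n) fs c1_gt0) mults_K.
  by have [-> _ _] := fs; rewrite eqxx.
case/(in_sptdP _ c_gt0)=> fP [s fs].
split; first by exists c; [lia | split=> //; exists s].
rewrite /tag_by_mult (least_part_sptd fP.1 (leqnn n) fs c_gt0) mults_K.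
by have [-> _ _] := fs; rewrite ltn_eqF.
Qed.

Lemma card_lhs_rhs : #|lhs_set| = #|rhs_set|.
Proof.
symmetry; apply: (card_in_bij (f := Phi) (g := Psi)).
  move=> x /phi_spec[hP psiK]; rewrite /Phi.
  by have [-> ->] := tag_by_mult_spec hP; rewrite psiK.
move=> y /tag_by_mult_untag[hP tagK]; rewrite /Psi /Phi.
by have [-> ->] := psi_spec hP.
Qed.

Lemma sptd_nat_recurrence :
  sptd_nat c.+1 n + sptd_nat c n = sptd_nat c m + pd_nat m.
Proof. by have := card_lhs_rhs; rewrite /lhs_set /rhs_set !card_sum_set. Qed.

End Bijection.

Lemma sptd_nat_eq0 j N : N < j -> sptd_nat j N = 0.
Proof.
move=> lt_Nj; apply/eqP; rewrite cards_eq0; apply/eqP/setP=> f; rewrite !inE.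
apply/negP=> /andP[_ /existsP[i /and3P[/eqP fi _ _]]].
by have := ltn_ord (f i); rewrite fi ltnS leqNgt lt_Nj.
Qed.

Theorem theorem1p1 (k n : nat) (hk : 2 <= k) (hn : 1 <= n) :
  (sptd k n + sptd k.-1 n =
   sptd k.-1 (n%:Z - k%:Z + 1) + pd (n%:Z - k%:Z + 1))%N.
Proof.
have [le_k_Sn | lt_Sn_k] := leqP k n.+1.
  have -> : (n%:Z - k%:Z + 1 = (n.+1 - k)%N%:Z)%R by lia.
  have c_gt0 : 0 < k.-1 by lia.
  have := sptd_nat_recurrence (n.+1 - k) c_gt0.
  have -> : n.+1 - k + k.-1 = n by lia.
  by rewrite prednK // ltnW.
have [m ->] : exists m, (n%:Z - k%:Z + 1 = Negz m)%R by exists (k - n.+2); lia.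
by rewrite /= !sptd_nat_eq0 //; lia.
Qed.
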